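(* Let $2\le k<n$ and let $A$ be an antipodal $k$-splitting of $Q_2^n$. Then $|u_1\cap u_2|\ge 2$ for all $u_1,u_2\in\beta(A)$.
   Context: $Q_2^n=\{0,1\}^n$. For $0\le m\le n$, an $m$-face of $Q_2^n$ is given by a tuple $a=(a_1,\dots,a_n)\in\{0,1,*\}^n$ with exactly $m$ entries equal to $*$; it denotes the set $\{x\in Q_2^n : x_i=a_i \text{ whenever } a_i\in\{0,1\}\}$. The direction of a face is the set of positions of its asterisks; two faces are parallel if they have the same direction, and two parallel faces $a,b$ are antipodal if $b_i=1-a_i$ at every non-asterisk position $i$. An antipodal $k$-splitting of $Q_2^n$ is a collection of exactly $2^k$ $(n-k)$-faces whose union is $Q_2^n$ and which contains no pair of parallel non-antipodal faces. For a face $a$, $\beta(a)=\{i: a_i\in\{0,1\}\}$, and $\beta(A)=\{\beta(a): a\in A\}$. *)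

From mathcomp Require Import all_boot.
Set Implicit Arguments. Unset Strict Implicit. Unset Printing Implicit Defensive.

Definition vertex (n : nat) := {ffun 'I_n -> bool}.
(* A face: None encodes the asterisk '*', Some b a fixed coordinate b. *)
Definition face (n : nat) := {ffun 'I_n -> option bool}.

Definition direction n (a : face n) : {set 'I_n} := [set i | a i == None].
Definition beta n (a : face n) : {set 'I_n} := [set i | a i != None].
Definition betaA n (A : {set face n}) : {set {set 'I_n}} := [set beta a | a in A].

Definition is_mface n (m : nat) (a : face n) : bool := #|direction a| == m.

Definition in_face n (x : vertex n) (a : face n) : bool :=
  [forall i, if a i is Some b then x i == b else true].

Definition parallel n (a b : face n) : bool := direction a == direction b.

Definition antipodal n (a b : face n) : bool :=
  parallel a b && [forall i, if a i is Some c then b i == Some (~~ c) else true].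

Definition antipodal_splitting n (k : nat) (A : {set face n}) : Prop :=
  [/\ #|A| = 2 ^ k,
      (forall a, a \in A -> is_mface (n - k) a),
      (forall x : vertex n, exists2 a, a \in A & in_face x a) &
      (forall a b, a \in A -> b \in A -> a != b -> parallel a b -> antipodal a b)].

From mathcomp Require Import all_boot.
Set Implicit Arguments. Unset Strict Implicit. Unset Printing Implicit Defensive.

(* The faces of an antipodal k-splitting tile the cube: 2^k faces of 2^(n-k)
   vertices each cover the 2^n vertices, so two faces of A that share a vertex
   coincide.  Every face a of A has a parallel, hence antipodal, partner a' in
   A.  Otherwise every other face c of A leaves free some coordinate j of
   beta a, and flipping x_j is a bijection of c that changes the parity of x on
   beta a; so c, like the whole cube, has as many vertices of each parity.
   Summing over the tiling, so would a, but that parity is constant on a.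
   Finally, if |beta a :&: beta b| <= 1, then b agrees with a or with a' on
   their common fixed coordinate, so b meets, hence equals, a or a', and
   beta b = beta a. *)


Lemma card_setI_involution (T : finType) (f : T -> T) (S P : {set T}) :
    involutive f -> {homo f : t / t \in S} -> (forall t, (f t \in P) = (t \notin P)) ->
  #|S :&: P| = #|S :&: ~: P|.
Proof.
move=> fK fS fP; rewrite -(card_imset _ (inv_inj fK)); apply: eq_card => t.
apply/imsetP/idP => [[u] | ]; rewrite !inE.
  by case/andP=> uS uP ->; rewrite fP uP fS.
by case/andP=> tS tP; exists (f t); rewrite ?fK // !inE fS // fP.
Qed.

Lemma card_setI_const_neq (T : finType) (S P : {set T}) (x0 : T) :
    x0 \in S -> {in S, forall x, (x \in P) = (x0 \in P)} ->
  #|S :&: P| != #|S :&: ~: P|.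
Proof.
move=> x0S constP.
have empty (Q : {set T}) : {in S, forall x, x \notin Q} -> #|S :&: Q| = 0.
  move=> SQ; apply/eqP; rewrite cards_eq0 -subset0.
  by apply/subsetP => x /setIP[/SQ/negP].
have pos (Q : {set T}) : x0 \in Q -> 0 < #|S :&: Q|.
  by move=> x0Q; apply/card_gt0P; exists x0; rewrite inE x0S.
case x0P: (x0 \in P).
  rewrite (empty (~: P)) -?lt0n ?pos // => x /constP.
  by rewrite !inE x0P => ->.
rewrite eq_sym (empty P) -?lt0n ?pos ?inE ?x0P // => x /constP ->.
by rewrite x0P.
Qed.

Lemma sum_card_rel (I J : finType) (A : {set I}) (B : {set J}) (R : I -> J -> bool) :
  \sum_(i in A) #|[set j in B | R i j]| = \sum_(j in B) #|[set i in A | R i j]|.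
Proof.
have cardE (K : finType) (C : {set K}) (Q : pred K) : #|[set x in C | Q x]| = \sum_(x in C) Q x.
  by rewrite -sum1dep_card big_mkcondr; apply: eq_bigr => x _; case: (Q x).
under eq_bigr do rewrite cardE.
by rewrite exchange_big; apply: eq_bigr => j _; rewrite cardE.
Qed.

Section Faces.
Variable n : nat.
Implicit Types (a b c : face n) (x : vertex n) (U : {set 'I_n}).

Definition face_set c : {set vertex n} := [set x | in_face x c].

Lemma in_faceP x c : reflect (forall i v, c i = Some v -> x i = v) (in_face x c).
Proof.
apply: (iffP forallP) => [xc i v ci | xc i]; first by move: (xc i); rewrite ci => /eqP.
by case ci: (c i) => [v|] //; rewrite (xc _ _ ci).
Qed.

Lemma card_face_set c : #|face_set c| = 2 ^ #|direction c|.
Proof.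
pose F i : pred bool := if c i is Some v then pred1 v else predT.
have -> : #|face_set c| = #|(family F : simpl_pred (vertex n))|.
  apply: eq_card => x; rewrite inE unfold_in /=.
  by apply: eq_forallb => i; rewrite /F; case: (c i).
rewrite card_family foldrE big_map big_enum /= (bigID (fun i => c i == None)) /=.
rewrite [X in _ * X]big1 => [|i]; last by rewrite /F; case: (c i) => // v _; rewrite card1.
rewrite muln1 -prod_nat_const; apply: eq_big => i; first by rewrite inE.
by rewrite /F => /eqP ->; rewrite card_bool.
Qed.

Lemma beta_setC c : beta c = ~: direction c.
Proof. by apply/setP => i; rewrite !inE. Qed.

Lemma card_beta c : #|beta c| = n - #|direction c|.
Proof. by rewrite beta_setC cardsCs card_ord setCK. Qed.

Lemma parallelE a b : parallel a b = (beta a == beta b).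
Proof. by rewrite !beta_setC (inj_eq (@setC_inj _)). Qed.

Definition compatible b c := forall i v w, b i = Some v -> c i = Some w -> v = w.

Lemma compatible_meet b c : compatible b c -> exists x, in_face x b && in_face x c.
Proof.
move=> bc; exists [ffun i => if b i is Some v then v else if c i is Some v then v else false].
apply/andP; split; apply/in_faceP => i v ci; rewrite ffunE ci //.
by case bi: (b i) => [w|] //; apply: bc bi ci.
Qed.

Lemma compatible_antipodal a a' b : antipodal a a' -> #|beta a :&: beta b| <= 1 ->
  compatible b a \/ compatible b a'.
Proof.
case/andP; rewrite parallelE => /eqP beta_a' /forallP anti small.
have [i /andP[ia bi] | none] := pickP [pred i | (i \in beta a) && (b i != None)]; last first.
  by left=> j v w bj aj; move: (none j); rewrite /= inE aj bj.
have only_i j v : b j = Some v -> j \in beta a -> j = i.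
  by move=> bj ja; apply: (card_le1_eqP small); apply/setIP; split; rewrite // inE ?bj.
move: ia bi (anti i); rewrite inE.
case ai: (a i) => [u|] // _; case bi: (b i) => [v|] // _ /eqP a'i.
have [vu | vu] := eqVneq v u; [left | right] => j v' w bj cj.
  have ji : j = i by apply: only_i bj _; rewrite inE cj.
  by move: bj cj; rewrite ji ai bi vu => -[<-] [<-].
have ji : j = i by apply: only_i bj _; rewrite beta_a' inE cj.
by move: bj cj vu; rewrite ji a'i bi => -[<-] [<-]; case: (u); case: (v).
Qed.

Definition parity U x := odd #|[set j in U | x j]|.

Definition flip j x : vertex n := [ffun i => (i == j) (+) x i].

Lemma flipK j : involutive (flip j).
Proof. by move=> x; apply/ffunP => i; rewrite !ffunE addbA addbb. Qed.

Lemma parity_flip U j x : j \in U -> parity U (flip j x) = ~~ parity U x.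
Proof.
move=> jU; rewrite /parity (cardsD1 j [set i in U | x i]).
rewrite (cardsD1 j [set i in U | flip j x i]).
have -> : [set i in U | flip j x i] :\ j = [set i in U | x i] :\ j.
  by apply/setP => i; rewrite !inE ffunE; case: eqP.
by rewrite !inE jU ffunE eqxx /=; case: (x j) => /=; rewrite ?negbK.
Qed.

Lemma in_face_flip c j x : c j = None -> in_face (flip j x) c = in_face x c.
Proof.
move=> cj; apply: eq_forallb => i; rewrite ffunE; case: eqP => [->|//].
by rewrite cj.
Qed.

Lemma parity_beta_face c x :
  in_face x c -> parity (beta c) x = odd #|[set i | c i == Some true]|.
Proof.
move=> /in_faceP xc; congr (odd _); apply: eq_card => i; rewrite !inE.
by case ci: (c i) => [v|] //=; rewrite (xc _ _ ci); case: v {ci}.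
Qed.

End Faces.

Section Splitting.
Variables (n k : nat) (A : {set face n}).
Hypotheses (le_kn : k <= n) (splitA : antipodal_splitting k A).

Lemma card_beta_splitting c : c \in A -> #|beta c| = k.
Proof. by case: splitA => _ dimA _ _ /dimA/eqP dimc; rewrite card_beta dimc subKn. Qed.

Lemma card_face_set_splitting c : c \in A -> #|face_set c| = 2 ^ (n - k).
Proof. by case: splitA => _ dimA _ _ /dimA/eqP dimc; rewrite card_face_set dimc. Qed.

Lemma splitting_cover_once x : #|[set c in A | in_face x c]| = 1.
Proof.
have [cardA _ coverA _] := splitA.
have covered y : 1 <= #|[set c in A | in_face y c]|.
  by have [c cA yc] := coverA y; apply/card_gt0P; exists c; rewrite inE cA.
have : \sum_(y in [set: vertex n]) #|[set c in A | in_face y c]|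
       = \sum_(y in [set: vertex n]) 1.
  rewrite -sum_card_rel (eq_bigr (fun=> 2 ^ (n - k))) => [|c cA]; last first.
    by rewrite -(card_face_set_splitting cA); apply: eq_card => y; rewrite !inE.
  rewrite sum_nat_const cardA -expnD subnKC // sum1_card cardsT.
  by rewrite card_ffun card_bool card_ord.
move/esym/eqP; rewrite (leqif_sum (fun y _ => leqif_eq (covered y))).
by move=> /forall_inP/(_ x (in_setT x))/eqP.
Qed.

Lemma splitting_compatible_eq c d : c \in A -> d \in A -> compatible c d -> c = d.
Proof.
move=> cA dA /compatible_meet[x /andP[xc xd]].
by apply: (card_le1_eqP (eq_leq (splitting_cover_once x))); rewrite inE ?cA ?dA.
Qed.

Lemma card_splitting_sum (S : {set vertex n}) : \sum_(c in A) #|face_set c :&: S| = #|S|.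
Proof.
rewrite (eq_bigr (fun c => #|[set x in S | in_face x c]|)) => [|c _]; last first.
  by apply: eq_card => x; rewrite !inE andbC.
by rewrite sum_card_rel -sum1_card; apply: eq_bigr => x _; apply: splitting_cover_once.
Qed.

Hypothesis k_gt0 : 0 < k.

Lemma splitting_partner a : a \in A -> exists2 a', a' \in A & a' != a /\ beta a' = beta a.
Proof.
move=> aA; set U := beta a; set P := [set x : vertex n | parity U x].
have [c /andP[cA /andP[ca /eqP bc]] | none] :=
  pickP [pred c in A | (c != a) && (beta c == U)]; first by exists c.
have flipP j x : j \in U -> (flip j x \in P) = (x \notin P).
  by move=> jU; rewrite !inE parity_flip.
have balanced c : (c \in A) && (c != a) -> #|face_set c :&: P| = #|face_set c :&: ~: P|.
  case/andP=> cA ca; have : ~~ (U \subset beta c).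
    apply: contraFN (none c) => sub.
    by rewrite /= cA ca eq_sym eqEcard sub /U !card_beta_splitting ?leqnn.
  case/subsetPn => j jU; rewrite inE negbK => /eqP cj.
  apply: (card_setI_involution (flipK j)) => [x|x]; last exact: flipP.
  by rewrite !inE in_face_flip.
have [j0 j0U] : exists j0, j0 \in U by apply/card_gt0P; rewrite card_beta_splitting.
have := card_setI_involution (S := setT) (flipK j0) (fun x _ => in_setT _)
  (flipP j0 ^~ j0U).
rewrite !setTI -(card_splitting_sum P) -(card_splitting_sum (~: P)) !(bigD1 a aA) /=.
rewrite (eq_bigr _ balanced) => /eqP; rewrite eqn_add2r.
have [x0 x0a] : exists x0, x0 \in face_set a.
  by apply/card_gt0P; rewrite card_face_set_splitting // expn_gt0.
have constP : {in face_set a, forall x, (x \in P) = (x0 \in P)}.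
  by move=> x; move: x0a; rewrite !inE => /parity_beta_face-> /parity_beta_face->.
by rewrite (negbTE (card_setI_const_neq x0a constP)).
Qed.

End Splitting.

Theorem proposition18 (n k : nat) (A : {set face n}) :
  2 <= k -> k < n -> antipodal_splitting k A ->
  forall u1 u2, u1 \in betaA A -> u2 \in betaA A -> 2 <= #|u1 :&: u2|.
Proof.
move=> k_ge2 lt_kn splitA u1 u2 /imsetP[a aA ->] /imsetP[b bA ->].
have le_kn := ltnW lt_kn.
have [<- | beta_ab] := eqVneq (beta a) (beta b).
  by rewrite setIid (card_beta_splitting le_kn splitA aA).
rewrite leqNgt; apply/negP => small.
have [a' a'A [a'a beta_a']] := splitting_partner le_kn splitA (ltnW k_ge2) aA.
have anti : antipodal a a'.
  case: splitA => _ _ _ /(_ a a' aA a'A); apply; first by rewrite eq_sym.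
  by rewrite parallelE beta_a'.
have eq_b := splitting_compatible_eq le_kn splitA bA.
case: (compatible_antipodal anti small) => [/(eq_b _ aA) | /(eq_b _ a'A)] eq_ba.
  by rewrite eq_ba eqxx in beta_ab.
by rewrite eq_ba beta_a' eqxx in beta_ab.
Qed.
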